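(* There exists a computable (2,1):1 structure $\mathcal{A}=(\omega,f)$ such that $\beta_{\mathcal{A}}$ is computable but $iso_{\mathcal{A}}$ is not computable (i.e. there is no partial computable function $\varphi$ with $\varphi(x)=iso_{\mathcal{A}}(x)$ for all $x\in\Lambda_{\mathcal{A}}$).
   Context: A (2,1):1 structure is a pair $\mathcal{A}=(A,f)$ with $A$ a countable set and $f:A\to A$ such that $|f^{-1}(a)|\in\{1,2\}$ for every $a\in A$; it is computable if $A$ is a computable set and $f$ is computable. The branching function is $\beta_{\mathcal{A}}(x)=|f^{-1}(x)|\in\{1,2\}$, and $\Lambda_{\mathcal{A}}=\{x:\beta_{\mathcal{A}}(x)=2\}$. For $x\in A$, $Tree_{\mathcal{A}}(x)$ is the directed graph with vertex set $\{a:\exists n\ge0\,(f^n(a)=x)\}$ and edges $(a,f(a))$ for $a$, $f(a)$ both in this set. The branch isomorphism function $iso_{\mathcal{A}}:\Lambda_{\mathcal{A}}\to\{0,1\}$ is defined, for $x\in\Lambda_{\mathcal{A}}$ with distinct pre-images $x_1,x_2$, by $iso_{\mathcal{A}}(x)=1$ if $Tree_{\mathcal{A}}(x_1)\cong Tree_{\mathcal{A}}(x_2)$ and $iso_{\mathcal{A}}(x)=0$ otherwise. *)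

From Stdlib Require Import Arith List.
Import ListNotations.

Inductive prf : Type :=
| PZero : prf
| PSucc : prf
| PProj : nat -> prf
| PComp : prf -> list prf -> prf
| PRec  : prf -> prf -> prf
| PMu   : prf -> prf.

Inductive eval : prf -> list nat -> nat -> Prop :=
| eval_zero : forall v, eval PZero v 0
| eval_succ : forall x v, eval PSucc (x :: v) (S x)
| eval_proj : forall i v, i < length v -> eval (PProj i) v (nth i v 0)
| eval_comp : forall f gs v ys y,
    Forall2 (fun g yi => eval g v yi) gs ys ->
    eval f ys y -> eval (PComp f gs) v y
| eval_rec0 : forall g h v y, eval g v y -> eval (PRec g h) (0 :: v) y
| eval_recS : forall g h n v z y,
    eval (PRec g h) (n :: v) z -> eval h (n :: z :: v) y ->
    eval (PRec g h) (S n :: v) y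
| eval_mu : forall f v n,
    eval f (n :: v) 0 ->
    (forall m, m < n -> exists k, eval f (m :: v) (S k)) ->
    eval (PMu f) v n.

Definition computable (g : nat -> nat) : Prop :=
  exists c : prf, forall x, eval c [x] (g x).

Definition preimage_card (f : nat -> nat) (x n : nat) : Prop :=
  exists l : list nat, NoDup l /\ length l = n /\ (forall a, In a l <-> f a = x).

Definition is_21_structure (f : nat -> nat) : Prop :=
  forall x, preimage_card f x 1 \/ preimage_card f x 2.

Definition in_Lambda (f : nat -> nat) (x : nat) : Prop := preimage_card f x 2.

Definition tree_vertex (f : nat -> nat) (x a : nat) : Prop :=
  exists n, Nat.iter n f a = x.

Definition tree_edge (f : nat -> nat) (x a b : nat) : Prop :=
  tree_vertex f x a /\ tree_vertex f x b /\ b = f a.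

Definition tree_iso (f : nat -> nat) (x1 x2 : nat) : Prop :=
  exists g : nat -> nat,
    (forall a, tree_vertex f x1 a -> tree_vertex f x2 (g a)) /\
    (forall a b, tree_vertex f x1 a -> tree_vertex f x1 b -> g a = g b -> a = b) /\
    (forall b, tree_vertex f x2 b -> exists a, tree_vertex f x1 a /\ g a = b) /\
    (forall a b, tree_vertex f x1 a -> tree_vertex f x1 b ->
       (tree_edge f x1 a b <-> tree_edge f x2 (g a) (g b))).

Definition iso_value (f : nat -> nat) (x v : nat) : Prop :=
  exists x1 x2, x1 <> x2 /\ f x1 = x /\ f x2 = x /\
    ((tree_iso f x1 x2 /\ v = 1) \/ (~ tree_iso f x1 x2 /\ v = 0)).

From Stdlib Require Import Arith List Lia Bool.
Import ListNotations.

(** Diagonalisation against all programs.  For every code [e] the node [xN e]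
    has two preimages, the roots of infinite chains [aN e _] and [bN e _].
    A natural number [n] may code a finite derivation showing that program [e]
    outputs 1 on input [xN e]; if it does, an infinite chain [cN e n _] is hung
    below [aN e n], which makes the two branches at [xN e] non-isomorphic;
    otherwise the bottom of that chain is a loop and stays detached.  Checking
    such a derivation is primitive recursive, so [f] and the branching function
    are given by mu-free programs, while program [e] answers wrongly at [xN e]:
    it outputs 1 exactly when the branches are not isomorphic. *)

Section PrfInd.
Variable P : prf -> Prop.
Hypothesis P_zero : P PZero.
Hypothesis P_succ : P PSucc.
Hypothesis P_proj : forall i, P (PProj i).
Hypothesis P_comp : forall f gs, P f -> Forall P gs -> P (PComp f gs).
Hypothesis P_rec : forall g h, P g -> P h -> P (PRec g h).
Hypothesis P_mu : forall f, P f -> P (PMu f).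

Fixpoint prf_ind_nested (c : prf) : P c :=
  match c with
  | PZero => P_zero
  | PSucc => P_succ
  | PProj i => P_proj i
  | PComp f gs => P_comp f gs (prf_ind_nested f)
      ((fix F (l : list prf) : Forall P l :=
          match l with
          | [] => Forall_nil _
          | g :: l' => Forall_cons _ (prf_ind_nested g) (F l')
          end) gs)
  | PRec g h => P_rec g h (prf_ind_nested g) (prf_ind_nested h)
  | PMu f => P_mu f (prf_ind_nested f)
  end.
End PrfInd.

Section EvalInd.
Variable P : prf -> list nat -> nat -> Prop.
Hypothesis P_zero : forall v, P PZero v 0.
Hypothesis P_succ : forall x v, P PSucc (x :: v) (S x).
Hypothesis P_proj : forall i v, i < length v -> P (PProj i) v (nth i v 0).
Hypothesis P_comp : forall f gs v ys y,
    Forall2 (fun g yi => eval g v yi /\ P g v yi) gs ys ->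
    eval f ys y -> P f ys y -> P (PComp f gs) v y.
Hypothesis P_rec0 : forall g h v y, eval g v y -> P g v y -> P (PRec g h) (0 :: v) y.
Hypothesis P_recS : forall g h n v z y,
    eval (PRec g h) (n :: v) z -> P (PRec g h) (n :: v) z ->
    eval h (n :: z :: v) y -> P h (n :: z :: v) y ->
    P (PRec g h) (S n :: v) y.
Hypothesis P_mu : forall f v n,
    eval f (n :: v) 0 -> P f (n :: v) 0 ->
    (forall m, m < n -> exists k, eval f (m :: v) (S k) /\ P f (m :: v) (S k)) ->
    P (PMu f) v n.

Fixpoint eval_ind_nested c v y (H : eval c v y) {struct H} : P c v y.
Proof.
  destruct H.
  - apply P_zero.
  - apply P_succ.
  - apply P_proj; assumption.
  - apply P_comp with ys; [| assumption | apply eval_ind_nested; assumption].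
    clear - H eval_ind_nested. induction H; constructor; auto.
  - apply P_rec0; [assumption | apply eval_ind_nested; assumption].
  - apply P_recS with z; try assumption; apply eval_ind_nested; assumption.
  - apply P_mu; [assumption | apply eval_ind_nested; assumption |].
    intros m Hm. destruct (H0 m Hm) as [k Hk]. exists k.
    split; [assumption | apply eval_ind_nested; assumption].
Qed.
End EvalInd.

Lemma eval_deterministic c v y : eval c v y -> forall y', eval c v y' -> y = y'.
Proof.
  revert c v y.
  apply (eval_ind_nested (fun c v y => forall y', eval c v y' -> y = y')).
  - intros v y' H; inversion H; auto.
  - intros x v y' H; inversion H; auto.
  - intros i v _ y' H; inversion H; auto.
  - intros f gs v ys y HF _ IHf y' H.
    inversion H as [| | | ? ? ? ys' ? Hgs' Hf' | | |]; subst.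
    assert (ys = ys') as <-.
    { clear - HF Hgs'. revert ys' Hgs'.
      induction HF as [|g gs yi ys [_ IHg] _ IH]; intros ys' Hgs'; inversion Hgs'; subst; auto.
      f_equal; auto. }
    auto.
  - intros g h v y _ IH y' H; inversion H; subst; auto.
  - intros g h n v z y _ IH1 _ IH2 y' H; inversion H; subst.
    match goal with H5 : eval (PRec g h) _ _ |- _ => apply IH1 in H5 end. subst. auto.
  - intros f v n _ IHf Hbelow y' H; inversion H as [| | | | | |? ? ? Hy' Hbelow']; subst.
    destruct (Nat.lt_trichotomy n y') as [Hl|[Hl|Hl]]; auto.
    + destruct (Hbelow' _ Hl) as [k Hk]. apply IHf in Hk. discriminate.
    + destruct (Hbelow _ Hl) as [k [_ Hk]]. apply Hk in Hy'. discriminate.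
Qed.

(** * Mu-free programs *)

Fixpoint den (c : prf) (v : list nat) : nat :=
  match c with
  | PZero => 0
  | PSucc => S (hd 0 v)
  | PProj i => nth i v 0
  | PComp f gs => den f (map (fun g => den g v) gs)
  | PRec g h =>
      match v with
      | [] => 0
      | n :: w => nat_rec (fun _ => nat) (den g w) (fun m r => den h (m :: r :: w)) n
      end
  | PMu _ => 0
  end.

(** [prim_wf k c]: [c] is mu-free and, called with [k] arguments, never reads past them. *)
Fixpoint prim_wf (k : nat) (c : prf) : bool :=
  match c with
  | PZero => true
  | PSucc => 1 <=? k
  | PProj i => i <? k
  | PComp f gs => prim_wf (length gs) f && forallb (prim_wf k) gs
  | PRec g h => match k with 0 => false | S k' => prim_wf k' g && prim_wf (S (S k')) h end
  | PMu _ => false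
  end.

Lemma den_comp f gs v : den (PComp f gs) v = den f (map (fun g => den g v) gs).
Proof. reflexivity. Qed.
Lemma den_recS g h n w :
  den (PRec g h) (S n :: w) = den h (n :: den (PRec g h) (n :: w) :: w).
Proof. reflexivity. Qed.

Lemma eval_den c v : prim_wf (length v) c = true -> eval c v (den c v).
Proof.
  revert v. induction c using prf_ind_nested; intros v Hw; simpl in Hw.
  - constructor.
  - destruct v; [discriminate | constructor].
  - apply Nat.ltb_lt in Hw. constructor; auto.
  - apply andb_prop in Hw as [Hf Hgs]. apply eval_comp with (map (fun g => den g v) gs).
    + clear Hf IHc.
      induction H; constructor; simpl in Hgs; apply andb_prop in Hgs as [Hg Hgs]; auto.
    + apply IHc. rewrite length_map. exact Hf.
  - destruct v as [|n w]; [discriminate|]. apply andb_prop in Hw as [Hg Hh].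
    induction n.
    + constructor. auto.
    + rewrite den_recS. apply eval_recS with (den (PRec c1 c2) (n :: w)); auto.
  - discriminate.
Qed.

Notation pj := PProj.
Notation ap := PComp.

Fixpoint cst (n : nat) : prf := match n with 0 => PZero | S m => ap PSucc [cst m] end.

Lemma den_cst n v : den (cst n) v = n.
Proof. induction n; simpl; auto. Qed.
Lemma den_proj i v : den (PProj i) v = nth i v 0.
Proof. reflexivity. Qed.
Lemma den_succ v : den PSucc v = S (hd 0 v).
Proof. reflexivity. Qed.
Lemma den_zero v : den PZero v = 0.
Proof. reflexivity. Qed.

Ltac simpl_den :=
  repeat progress (rewrite ?den_comp, ?den_proj, ?den_succ, ?den_zero; cbn [map nth hd]).

(** Below, each program [xP] comes with a lemma [den_x] giving its denotation;
    truth values are represented by [Nat.b2n]. *)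

Definition addP := PRec (pj 0) (ap PSucc [pj 1]).
Lemma den_add a b : den addP [a; b] = a + b.
Proof. induction a; auto. unfold addP in *. rewrite den_recS. simpl in *. rewrite IHa. auto. Qed.

Definition mulP := PRec PZero (ap addP [pj 1; pj 2]).
Lemma den_mul a b : den mulP [a; b] = a * b.
Proof.
  induction a; auto. unfold mulP in *. rewrite den_recS, IHa. simpl_den. rewrite den_add. lia.
Qed.

Definition predP := PRec PZero (pj 0).
Lemma den_pred a : den predP [a] = pred a.
Proof. destruct a; auto. Qed.

Definition subrevP := PRec (pj 0) (ap predP [pj 1]).
Lemma den_subrev b a : den subrevP [b; a] = a - b.
Proof.
  induction b; [simpl; lia|].
  unfold subrevP in *. rewrite den_recS, IHb. simpl_den. rewrite den_pred. lia.
Qed.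
Definition subP := ap subrevP [pj 1; pj 0].
Lemma den_sub a b : den subP [a; b] = a - b.
Proof. unfold subP. simpl_den. apply den_subrev. Qed.

Definition iszP := ap subP [cst 1; pj 0].
Lemma den_isz a : den iszP [a] = Nat.b2n (a =? 0).
Proof. unfold iszP. simpl_den. rewrite den_cst, den_sub. destruct a; simpl; lia. Qed.
Definition nzP := ap iszP [ap iszP [pj 0]].
Lemma den_nz a : den nzP [a] = Nat.b2n (negb (a =? 0)).
Proof. unfold nzP. simpl_den. rewrite !den_isz. destruct a; reflexivity. Qed.

Definition lebP := ap iszP [subP].
Lemma den_leb a b : den lebP [a; b] = Nat.b2n (a <=? b).
Proof.
  unfold lebP. simpl_den. rewrite den_sub, den_isz. f_equal.
  apply eq_true_iff_eq. rewrite Nat.eqb_eq, Nat.leb_le. lia.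
Qed.
Definition ltbP := ap lebP [ap PSucc [pj 0]; pj 1].
Lemma den_ltb a b : den ltbP [a; b] = Nat.b2n (a <? b).
Proof. unfold ltbP. simpl_den. rewrite den_leb. reflexivity. Qed.
Definition eqbP := ap iszP [ap addP [subP; ap subP [pj 1; pj 0]]].
Lemma den_eqb a b : den eqbP [a; b] = Nat.b2n (a =? b).
Proof.
  unfold eqbP. simpl_den. rewrite !den_sub, den_add, den_isz. f_equal.
  apply eq_true_iff_eq. rewrite !Nat.eqb_eq. lia.
Qed.

Lemma b2n_and a b : Nat.b2n a * Nat.b2n b = Nat.b2n (a && b).
Proof. destruct a, b; reflexivity. Qed.
Lemma b2n_or a b : Nat.b2n (negb (Nat.b2n a + Nat.b2n b =? 0)) = Nat.b2n (a || b).
Proof. destruct a, b; reflexivity. Qed.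
Lemma b2n_isz b : Nat.b2n (Nat.b2n b =? 0) = Nat.b2n (negb b).
Proof. destruct b; reflexivity. Qed.
Lemma b2n_nz b : Nat.b2n (negb (Nat.b2n b =? 0)) = Nat.b2n b.
Proof. destruct b; reflexivity. Qed.

Definition andP := mulP.
Lemma den_and a b : den andP [Nat.b2n a; Nat.b2n b] = Nat.b2n (a && b).
Proof. unfold andP. rewrite den_mul. apply b2n_and. Qed.
Definition orP := ap nzP [addP].
Lemma den_or a b : den orP [Nat.b2n a; Nat.b2n b] = Nat.b2n (a || b).
Proof. unfold orP. simpl_den. rewrite den_add, den_nz. apply b2n_or. Qed.
Definition notP := iszP.
Lemma den_not a : den notP [Nat.b2n a] = Nat.b2n (negb a).
Proof. unfold notP. rewrite den_isz. apply b2n_isz. Qed.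

Definition iteP := ap addP [ap mulP [pj 0; pj 1]; ap mulP [ap iszP [pj 0]; pj 2]].
Lemma den_ite (b : bool) x y : den iteP [Nat.b2n b; x; y] = if b then x else y.
Proof. unfold iteP. simpl_den. rewrite !den_mul, den_isz, den_add. destruct b; simpl; lia. Qed.

Fixpoint bsum (G : nat -> nat) (n : nat) : nat :=
  match n with 0 => 0 | S m => bsum G m + G m end.

Lemma bsum_ext G G' n : (forall i, i < n -> G i = G' i) -> bsum G n = bsum G' n.
Proof. induction n; simpl; intros; auto. rewrite IHn, H; auto. Qed.

Lemma bsum_ltb n s : bsum (fun k => Nat.b2n (k <? s)) n = Nat.min n s.
Proof.
  induction n; cbn [bsum]; [lia|]. rewrite IHn.
  destruct (n <? s) eqn:E; [apply Nat.ltb_lt in E | apply Nat.ltb_ge in E]; cbn [Nat.b2n]; lia.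
Qed.

Lemma bsum_b2n_eq0 (q : nat -> bool) n :
  bsum (fun i => Nat.b2n (q i)) n = 0 <-> forall i, i < n -> q i = false.
Proof.
  induction n; simpl; [split; intros; [lia | auto]|].
  split.
  - intros H i Hi. destruct (Nat.eq_dec i n) as [->|Hin].
    + destruct (q n); [simpl in H; lia | auto].
    + apply IHn; [lia | lia].
  - intros H. rewrite (proj2 IHn) by (intros; apply H; lia). rewrite H by lia. reflexivity.
Qed.

Definition projs (k off : nat) : list prf := map (fun j => pj (j + off)) (seq 0 k).

Lemma projs_S k off : projs (S k) off = pj off :: projs k (S off).
Proof.
  unfold projs. simpl. f_equal. rewrite <- seq_shift, map_map.
  apply map_ext. intros. f_equal. lia.
Qed.

Lemma map_den_projs k off u w : length u = off -> length w = k ->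
  map (fun g => den g (u ++ w)) (projs k off) = w.
Proof.
  revert off u w. induction k; intros off u w Hu Hw.
  - destruct w; [reflexivity | discriminate].
  - destruct w as [|x w]; [discriminate|]. rewrite projs_S. simpl map. f_equal.
    + simpl. rewrite app_nth2 by lia. rewrite Hu, Nat.sub_diag. reflexivity.
    + replace (u ++ x :: w) with ((u ++ [x]) ++ w) by (rewrite <- app_assoc; reflexivity).
      apply IHk; auto. rewrite length_app; simpl; lia.
Qed.

Definition sumP (k : nat) (g : prf) : prf :=
  PRec PZero (ap addP [pj 1; ap g (pj 0 :: projs k 2)]).

Lemma den_sum k g n w G : length w = k -> (forall i, den g (i :: w) = G i) ->
  den (sumP k g) (n :: w) = bsum G n.
Proof.
  intros Hl HG. induction n; auto.
  unfold sumP in *. rewrite den_recS, IHn. simpl_den. rewrite den_add.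
  simpl bsum. f_equal. rewrite <- HG. do 2 f_equal.
  apply (map_den_projs k 2 [n; bsum G n] w); auto.
Qed.

Definition allN n (q : nat -> bool) := bsum (fun i => Nat.b2n (negb (q i))) n =? 0.
Definition exN n (q : nat -> bool) := negb (bsum (fun i => Nat.b2n (q i)) n =? 0).

Lemma allN_iff n q : allN n q = true <-> forall i, i < n -> q i = true.
Proof.
  unfold allN. rewrite Nat.eqb_eq, (bsum_b2n_eq0 (fun i => negb (q i))).
  split; intros H i Hi; specialize (H i Hi); destruct (q i); auto.
Qed.

Lemma exN_iff n q : exN n q = true <-> exists i, i < n /\ q i = true.
Proof.
  unfold exN. rewrite negb_true_iff, Nat.eqb_neq, (bsum_b2n_eq0 q). split.
  - intros H. induction n as [|n IH]; [elim H; intros; lia|].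
    destruct (q n) eqn:E; [exists n; auto|].
    destruct IH as [i [Hi Hq]].
    + intros Hall. apply H. intros i Hi. destruct (Nat.eq_dec i n) as [->|]; auto. apply Hall. lia.
    + exists i. split; [lia | auto].
  - intros [i [Hi Hq]] Hall. rewrite Hall in Hq by exact Hi. discriminate.
Qed.

Definition allP k g := ap iszP [sumP k (ap iszP [g])].
Lemma den_all k g n w q : length w = k -> (forall i, den g (i :: w) = Nat.b2n (q i)) ->
  den (allP k g) (n :: w) = Nat.b2n (allN n q).
Proof.
  intros Hl Hq. unfold allP. simpl_den.
  rewrite (den_sum k _ n w (fun i => Nat.b2n (negb (q i)))); auto.
  - rewrite den_isz. reflexivity.
  - intros i. simpl_den. rewrite Hq, den_isz. apply b2n_isz.
Qed.

Definition exP k g := ap nzP [sumP k g].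
Lemma den_ex k g n w q : length w = k -> (forall i, den g (i :: w) = Nat.b2n (q i)) ->
  den (exP k g) (n :: w) = Nat.b2n (exN n q).
Proof.
  intros Hl Hq. unfold exP. simpl_den.
  rewrite (den_sum k _ n w (fun i => Nat.b2n (q i))); auto.
  rewrite den_nz. reflexivity.
Qed.

(** * Cantor pairing *)

Definition tri (s : nat) := bsum (fun i => i) (S s).
Definition cpair a b := tri (a + b) + b.
(** [diag n] is the index of the diagonal on which [n] lies. *)
Definition diag n := bsum (fun k => Nat.b2n (tri (S k) <=? n)) n.
Definition csnd n := n - tri (diag n).
Definition cfst n := diag n - csnd n.

Lemma tri_S s : tri (S s) = tri s + S s.
Proof. reflexivity. Qed.
Lemma tri_ge s : s <= tri s.
Proof. induction s; unfold tri; simpl; lia. Qed.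
Lemma tri_mono a b : a <= b -> tri a <= tri b.
Proof. induction 1; auto. rewrite tri_S. lia. Qed.

Lemma tri_decomp n : exists s b, b <= s /\ n = tri s + b.
Proof.
  induction n as [|n [s [b [Hb ->]]]]; [exists 0, 0; auto|].
  destruct (Nat.eq_dec b s) as [->|].
  - exists (S s), 0. rewrite tri_S. lia.
  - exists s, (S b). lia.
Qed.

Lemma diag_tri s b : b <= s -> diag (tri s + b) = s.
Proof.
  intros Hb. unfold diag. rewrite (bsum_ext _ (fun k => Nat.b2n (k <? s))).
  - rewrite bsum_ltb. pose proof (tri_ge s). lia.
  - intros k _. f_equal. apply eq_true_iff_eq. rewrite Nat.leb_le, Nat.ltb_lt. split.
    + intros H. destruct (Nat.lt_ge_cases k s) as [|Hsk]; auto.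
      assert (tri (S s) <= tri (S k)) by (apply tri_mono; lia). pose proof (tri_S s). lia.
    + intros H. assert (tri (S k) <= tri s) by (apply tri_mono; lia). lia.
Qed.

Lemma cfst_cpair a b : cfst (cpair a b) = a.
Proof. unfold cfst, csnd, cpair. rewrite diag_tri by lia. lia. Qed.
Lemma csnd_cpair a b : csnd (cpair a b) = b.
Proof. unfold csnd, cpair. rewrite diag_tri by lia. lia. Qed.

Lemma cpair_cfst_csnd n : cpair (cfst n) (csnd n) = n.
Proof.
  destruct (tri_decomp n) as [s [b [Hb ->]]]. unfold cfst, csnd, cpair.
  rewrite diag_tri by lia.
  replace (s - (tri s + b - tri s) + (tri s + b - tri s)) with s by lia. lia.
Qed.

Lemma cpair_inj a b c d : cpair a b = cpair c d -> a = c /\ b = d.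
Proof.
  intros H. split.
  - rewrite <- (cfst_cpair a b), H. apply cfst_cpair.
  - rewrite <- (csnd_cpair a b), H. apply csnd_cpair.
Qed.

Lemma csnd_le n : csnd n <= n.
Proof. unfold csnd. lia. Qed.

Definition triP := ap (sumP 0 (pj 0)) [ap PSucc [pj 0]].
Lemma den_tri s : den triP [s] = tri s.
Proof. unfold triP. simpl_den. apply den_sum; auto. Qed.
Definition cpairP := ap addP [ap triP [addP]; pj 1].
Lemma den_cpair a b : den cpairP [a; b] = cpair a b.
Proof. unfold cpairP. simpl_den. rewrite den_add, den_tri, den_add. reflexivity. Qed.
Definition diagP := ap (sumP 1 (ap lebP [ap triP [ap PSucc [pj 0]]; pj 1])) [pj 0; pj 0].
Lemma den_diag n : den diagP [n] = diag n.
Proof.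
  unfold diagP. simpl_den. apply den_sum; auto.
  intros i. simpl_den. rewrite den_tri, den_leb. reflexivity.
Qed.
Definition csndP := ap subP [pj 0; ap triP [diagP]].
Lemma den_csnd n : den csndP [n] = csnd n.
Proof. unfold csndP. simpl_den. rewrite den_diag, den_tri, den_sub. reflexivity. Qed.
Definition cfstP := ap subP [diagP; csndP].
Lemma den_cfst n : den cfstP [n] = cfst n.
Proof. unfold cfstP. simpl_den. rewrite den_diag, den_csnd, den_sub. reflexivity. Qed.

(** [lenN l] counts the nonzero iterated tails of [l]; the bound [l] suffices
    because a code is at least the length of the sequence it codes. *)
Definition hdN l := cfst (pred l).
Definition tlN l := csnd (pred l).
Definition consN h t := S (cpair h t).
Definition iterTl k l := Nat.iter k tlN l.
Definition nthN i l := hdN (iterTl i l).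
Definition lenN l := bsum (fun k => Nat.b2n (negb (iterTl k l =? 0))) l.

Fixpoint list_code (l : list nat) : nat :=
  match l with [] => 0 | x :: r => consN x (list_code r) end.

Lemma hdN_consN h t : hdN (consN h t) = h.
Proof. apply cfst_cpair. Qed.
Lemma tlN_consN h t : tlN (consN h t) = t.
Proof. apply csnd_cpair. Qed.

Lemma consN_eqb0 h t : (consN h t =? 0) = false.
Proof. reflexivity. Qed.

Lemma iterTl_0 k : iterTl k 0 = 0.
Proof. induction k; auto. unfold iterTl in *. simpl. rewrite IHk. reflexivity. Qed.

Lemma iterTl_list_code k l : iterTl k (list_code l) = list_code (skipn k l).
Proof.
  revert l. induction k; intros l; auto. unfold iterTl in *. rewrite Nat.iter_succ_r.
  destruct l; simpl.
  - apply iterTl_0.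
  - rewrite tlN_consN. apply IHk.
Qed.

Lemma nthN_list_code i l : nthN i (list_code l) = nth i l 0.
Proof.
  unfold nthN. rewrite iterTl_list_code. revert l.
  induction i; destruct l; simpl; auto. apply hdN_consN.
Qed.

Lemma list_code_ge l : length l <= list_code l.
Proof. induction l; simpl; auto. unfold consN, cpair. lia. Qed.

Lemma lenN_list_code l : lenN (list_code l) = length l.
Proof.
  unfold lenN. rewrite (bsum_ext _ (fun k => Nat.b2n (k <? length l))).
  - rewrite bsum_ltb. pose proof (list_code_ge l). lia.
  - intros k _. rewrite iterTl_list_code. f_equal.
    destruct (k <? length l) eqn:E; [apply Nat.ltb_lt in E | apply Nat.ltb_ge in E].
    + destruct (skipn k l) eqn:Hs; [|reflexivity].
      apply (f_equal (@length nat)) in Hs. rewrite length_skipn in Hs. simpl in Hs. lia.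
    + rewrite skipn_all2 by lia. reflexivity.
Qed.

Lemma list_code_surj n : exists l, list_code l = n.
Proof.
  induction n as [[|n] IH] using lt_wf_ind; [exists []; auto|].
  destruct (IH (csnd n)) as [l Hl]; [pose proof (csnd_le n); lia|].
  exists (cfst n :: l). simpl. unfold consN. rewrite Hl, cpair_cfst_csnd. reflexivity.
Qed.

Definition hdP := ap cfstP [predP].
Lemma den_hd l : den hdP [l] = hdN l.
Proof. unfold hdP. simpl_den. rewrite den_pred, den_cfst. reflexivity. Qed.
Definition tlP := ap csndP [predP].
Lemma den_tl l : den tlP [l] = tlN l.
Proof. unfold tlP. simpl_den. rewrite den_pred, den_csnd. reflexivity. Qed.
Definition consP := ap PSucc [cpairP].
Lemma den_cons h t : den consP [h; t] = consN h t.
Proof. unfold consP. simpl_den. rewrite den_cpair. reflexivity. Qed.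
Definition iterTlP := PRec (pj 0) (ap tlP [pj 1]).
Lemma den_iterTl k l : den iterTlP [k; l] = iterTl k l.
Proof.
  induction k; auto. unfold iterTlP in *. rewrite den_recS, IHk. simpl_den.
  rewrite den_tl. reflexivity.
Qed.
Definition nthP := ap hdP [iterTlP].
Lemma den_nth i l : den nthP [i; l] = nthN i l.
Proof. unfold nthP. simpl_den. rewrite den_iterTl, den_hd. reflexivity. Qed.
Definition lenP := ap (sumP 1 (ap nzP [iterTlP])) [pj 0; pj 0].
Lemma den_len l : den lenP [l] = lenN l.
Proof.
  unfold lenP. simpl_den. apply den_sum; auto.
  intros i. simpl_den. rewrite den_iterTl, den_nz. reflexivity.
Qed.

(** * Evaluation certificates *)

(** [judgment c a y h] asserts that the program with code [c] maps the argument
    sequence coded by [a] to [y].  The hint [h] codes the intermediate values of a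
    composition, or the value at the predecessor in a primitive recursion.
    [rule_ok L c a y h] says that this judgment follows by one rule of [eval]
    from judgments recorded in the sequence [L]. *)
Definition judgment c a y h := cpair c (cpair a (cpair y h)).
Definition jc j := cfst j.
Definition ja j := cfst (csnd j).
Definition jy j := cfst (csnd (csnd j)).
Definition jh j := csnd (csnd (csnd j)).

Lemma jc_judgment c a y h : jc (judgment c a y h) = c.
Proof. apply cfst_cpair. Qed.
Lemma ja_judgment c a y h : ja (judgment c a y h) = a.
Proof. unfold ja, judgment. rewrite csnd_cpair. apply cfst_cpair. Qed.
Lemma jy_judgment c a y h : jy (judgment c a y h) = y.
Proof. unfold jy, judgment. rewrite !csnd_cpair. apply cfst_cpair. Qed.
Lemma jh_judgment c a y h : jh (judgment c a y h) = h.
Proof. unfold jh, judgment. rewrite !csnd_cpair. reflexivity. Qed.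

Definition memN L c a y :=
  exN (lenN L) (fun i => let j := nthN i L in ((jc j =? c) && (ja j =? a)) && (jy j =? y)).
Definition memposN L c a :=
  exN (lenN L) (fun i => let j := nthN i L in ((jc j =? c) && (ja j =? a)) && negb (jy j =? 0)).

Fixpoint prf_code (c : prf) : nat :=
  match c with
  | PZero => cpair 0 0
  | PSucc => cpair 1 0
  | PProj i => cpair 2 i
  | PComp f gs => cpair 3 (cpair (prf_code f) (list_code (map prf_code gs)))
  | PRec g h => cpair 4 (cpair (prf_code g) (prf_code h))
  | PMu f => cpair 5 (prf_code f)
  end.

Section Rules.
Variables L c a y h : nat.
Let t := cfst c.
Let b := csnd c.

Definition zero_rule := (t =? 0) && (y =? 0).
Definition succ_rule := ((t =? 1) && negb (a =? 0)) && (y =? S (hdN a)).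
Definition proj_rule := ((t =? 2) && (b <? lenN a)) && (y =? nthN b a).
Definition comp_rule :=
  (((t =? 3) && (lenN (csnd b) =? lenN h))
   && allN (lenN (csnd b)) (fun i => memN L (nthN i (csnd b)) a (nthN i h)))
  && memN L (cfst b) h y.
Definition rec_rule :=
  ((t =? 4) && negb (a =? 0))
  && (if hdN a =? 0 then memN L (cfst b) (tlN a) y
      else memN L c (consN (pred (hdN a)) (tlN a)) h
           && memN L (csnd b) (consN (pred (hdN a)) (consN h (tlN a))) y).
Definition mu_rule :=
  ((t =? 5) && memN L b (consN y a) 0) && allN y (fun m => memposN L b (consN m a)).

Definition rule_ok :=
  zero_rule || (succ_rule || (proj_rule || (comp_rule || (rec_rule || mu_rule)))).
End Rules.

Tactic Notation "unfold_rules" :=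
  unfold rule_ok, zero_rule, succ_rule, proj_rule, comp_rule, rec_rule, mu_rule.
Tactic Notation "unfold_rules" "in" hyp(H) :=
  unfold rule_ok, zero_rule, succ_rule, proj_rule, comp_rule, rec_rule, mu_rule in H.

Definition justifiedN L j := rule_ok L (jc j) (ja j) (jy j) (jh j).
Definition certN L := allN (lenN L) (fun i => justifiedN L (nthN i L)).

Definition records Ls c a y := exists j, In j Ls /\ jc j = c /\ ja j = a /\ jy j = y.
Definition records_pos Ls c a := exists j, In j Ls /\ jc j = c /\ ja j = a /\ jy j <> 0.
Definition is_cert Ls := forall j, In j Ls -> justifiedN (list_code Ls) j = true.

Lemma In_nthN_list_code Ls (P : nat -> Prop) :
  (exists i, i < lenN (list_code Ls) /\ P (nthN i (list_code Ls))) <-> exists j, In j Ls /\ P j.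
Proof.
  rewrite lenN_list_code. split.
  - intros [i [Hi H]]. rewrite nthN_list_code in H.
    exists (nth i Ls 0). split; auto. apply nth_In; auto.
  - intros [j [Hj H]]. apply In_nth with (d := 0) in Hj as [i [Hi <-]].
    exists i. rewrite nthN_list_code. auto.
Qed.

Lemma memN_records Ls c a y : memN (list_code Ls) c a y = true <-> records Ls c a y.
Proof.
  unfold memN, records. rewrite exN_iff.
  rewrite <- (In_nthN_list_code Ls (fun j => jc j = c /\ ja j = a /\ jy j = y)).
  split; intros [i [Hi H]]; exists i; split; auto; cbv zeta in *.
  - apply andb_true_iff in H as [H H3]. apply andb_true_iff in H as [H1 H2].
    apply Nat.eqb_eq in H1, H2, H3. auto.
  - destruct H as [-> [-> ->]]. rewrite !Nat.eqb_refl. reflexivity.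
Qed.

Lemma memposN_records_pos Ls c a : memposN (list_code Ls) c a = true <-> records_pos Ls c a.
Proof.
  unfold memposN, records_pos. rewrite exN_iff.
  rewrite <- (In_nthN_list_code Ls (fun j => jc j = c /\ ja j = a /\ jy j <> 0)).
  split; intros [i [Hi H]]; exists i; split; auto; cbv zeta in *.
  - apply andb_true_iff in H as [H H3]. apply andb_true_iff in H as [H1 H2].
    apply Nat.eqb_eq in H1, H2. apply negb_true_iff, Nat.eqb_neq in H3. auto.
  - destruct H as [-> [-> H]]. apply Nat.eqb_neq in H. rewrite !Nat.eqb_refl, H. reflexivity.
Qed.

Lemma certN_is_cert Ls : certN (list_code Ls) = true <-> is_cert Ls.
Proof.
  unfold certN, is_cert. rewrite allN_iff, lenN_list_code. split.
  - intros H j Hj. apply In_nth with (d := 0) in Hj as [i [Hi <-]].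
    rewrite <- nthN_list_code. auto.
  - intros H i Hi. rewrite nthN_list_code. apply H, nth_In; auto.
Qed.

Ltac simpl_rule_ok H :=
  unfold_rules in H; cbn [prf_code] in H;
  rewrite ?cfst_cpair, ?csnd_cpair in H;
  cbn [Nat.eqb andb orb Nat.pred] in H; rewrite ?orb_false_r in H.

Lemma Forall2_of_nth {A B} (R : A -> B -> Prop) l1 l2 d1 d2 : length l1 = length l2 ->
  (forall i, i < length l1 -> R (nth i l1 d1) (nth i l2 d2)) -> Forall2 R l1 l2.
Proof.
  revert l2; induction l1; destruct l2; simpl; intros Hl H; try discriminate; constructor.
  - apply (H 0); lia.
  - apply IHl1; [lia|]. intros i Hi. apply (H (S i)); lia.
Qed.

Section Soundness.
Variable Ls : list nat.
Hypothesis Ls_cert : is_cert Ls.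

Definition sound_for c := forall v y, records Ls (prf_code c) (list_code v) y -> eval c v y.

Lemma records_rule_ok c a y : records Ls c a y -> exists h, rule_ok (list_code Ls) c a y h = true.
Proof. intros [j [Hj [<- [<- <-]]]]. exists (jh j). apply Ls_cert, Hj. Qed.

Lemma cert_sound_comp f gs : sound_for f -> Forall sound_for gs -> sound_for (PComp f gs).
Proof.
  intros IHf IHgs v y Hr. apply records_rule_ok in Hr as [h Ok]. simpl_rule_ok Ok.
  destruct (list_code_surj h) as [ys <-].
  rewrite cfst_cpair, !lenN_list_code, length_map in Ok.
  apply andb_true_iff in Ok as [Ok Hf]; apply andb_true_iff in Ok as [Hlen Hgs].
  apply Nat.eqb_eq in Hlen. rewrite allN_iff in Hgs. rewrite memN_records in Hf.
  apply eval_comp with ys; [| apply IHf, Hf].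
  apply Forall2_of_nth with (d1 := PZero) (d2 := 0); auto.
  intros i Hi. specialize (Hgs i Hi).
  rewrite !nthN_list_code, memN_records in Hgs. rewrite Forall_forall in IHgs.
  apply IHgs; [apply nth_In; auto|].
  rewrite (nth_indep _ 0 (prf_code PZero)), map_nth in Hgs by (rewrite length_map; auto).
  exact Hgs.
Qed.

Lemma cert_sound_rec g h : sound_for g -> sound_for h -> sound_for (PRec g h).
Proof.
  intros IHg IHh [|n w] y Hr.
  { apply records_rule_ok in Hr as [z Ok]. simpl_rule_ok Ok. discriminate. }
  revert y Hr. induction n; intros y Hr; apply records_rule_ok in Hr as [z Ok];
    cbn [list_code] in Ok; simpl_rule_ok Ok; rewrite hdN_consN, tlN_consN in Ok;
    cbn [Nat.eqb Nat.pred] in Ok; rewrite ?cfst_cpair, ?csnd_cpair in Ok;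
    apply andb_true_iff in Ok as [_ Ok].
  - rewrite memN_records in Ok. constructor. apply IHg, Ok.
  - apply andb_true_iff in Ok as [Hprev Hstep].
    change (consN n (list_code w)) with (list_code (n :: w)) in Hprev.
    change (consN n (consN z (list_code w))) with (list_code (n :: z :: w)) in Hstep.
    rewrite memN_records in Hprev, Hstep. apply eval_recS with z.
    + apply IHn, Hprev.
    + apply IHh, Hstep.
Qed.

Lemma cert_sound_mu f : sound_for f -> sound_for (PMu f).
Proof.
  intros IHf v y Hr. apply records_rule_ok in Hr as [h Ok]. simpl_rule_ok Ok.
  apply andb_true_iff in Ok as [Hzero Hbelow].
  change (consN y (list_code v)) with (list_code (y :: v)) in Hzero.
  rewrite memN_records in Hzero. rewrite allN_iff in Hbelow.
  constructor; [apply IHf, Hzero|].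
  intros m Hm. specialize (Hbelow m Hm).
  change (consN m (list_code v)) with (list_code (m :: v)) in Hbelow.
  rewrite memposN_records_pos in Hbelow. destruct Hbelow as [j [Hj [Hc [Ha Hy]]]].
  destruct (jy j) as [|k] eqn:E; [contradiction|]. exists k. apply IHf. exists j. auto.
Qed.

Lemma cert_sound c : sound_for c.
Proof.
  induction c using prf_ind_nested.
  - intros v y Hr. apply records_rule_ok in Hr as [h Ok]. simpl_rule_ok Ok.
    apply Nat.eqb_eq in Ok as ->. constructor.
  - intros v y Hr. apply records_rule_ok in Hr as [h Ok]. simpl_rule_ok Ok.
    apply andb_true_iff in Ok as [Hv Hy]. destruct v as [|x w]; [discriminate|].
    cbn [list_code] in Hy. rewrite hdN_consN in Hy. apply Nat.eqb_eq in Hy as ->. constructor.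
  - intros v y Hr. apply records_rule_ok in Hr as [h Ok]. simpl_rule_ok Ok.
    apply andb_true_iff in Ok as [Hi Hy]. rewrite lenN_list_code in Hi.
    rewrite nthN_list_code in Hy.
    apply Nat.ltb_lt in Hi. apply Nat.eqb_eq in Hy as ->. constructor. exact Hi.
  - apply cert_sound_comp; assumption.
  - apply cert_sound_rec; assumption.
  - apply cert_sound_mu; assumption.
Qed.
End Soundness.

Lemma records_incl Ls Ls' c a y : incl Ls Ls' -> records Ls c a y -> records Ls' c a y.
Proof. intros H [j [Hj Hr]]. exists j. auto. Qed.
Lemma records_pos_incl Ls Ls' c a : incl Ls Ls' -> records_pos Ls c a -> records_pos Ls' c a.
Proof. intros H [j [Hj Hr]]. exists j. auto. Qed.

Lemma rule_ok_mono L L' c a y h :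
  (forall c a y, memN L c a y = true -> memN L' c a y = true) ->
  (forall c a, memposN L c a = true -> memposN L' c a = true) ->
  rule_ok L c a y h = true -> rule_ok L' c a y h = true.
Proof.
  intros Hm Hz. unfold_rules. destruct (hdN a =? 0);
  rewrite ?orb_true_iff, ?andb_true_iff, ?allN_iff; intros H;
  (destruct H as [H|[H|[H|[H|[H|H]]]]];
   [left | right; left | do 2 right; left | do 3 right; left | do 4 right; left | do 5 right]);
  repeat match goal with H : _ /\ _ |- _ => destruct H end; repeat split; auto.
Qed.

Lemma rule_ok_incl Ls Ls' c a y h : incl Ls Ls' ->
  rule_ok (list_code Ls) c a y h = true -> rule_ok (list_code Ls') c a y h = true.
Proof.
  intros H. apply rule_ok_mono.
  - intros c' a' y'. rewrite !memN_records. apply records_incl, H.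
  - intros c' a'. rewrite !memposN_records_pos. apply records_pos_incl, H.
Qed.

Lemma is_cert_nil : is_cert [].
Proof. intros j []. Qed.

Lemma is_cert_app Ls1 Ls2 : is_cert Ls1 -> is_cert Ls2 -> is_cert (Ls1 ++ Ls2).
Proof.
  intros H1 H2 j Hj. apply in_app_or in Hj as [Hj|Hj].
  - apply rule_ok_incl with Ls1; [apply incl_appl, incl_refl | apply H1, Hj].
  - apply rule_ok_incl with Ls2; [apply incl_appr, incl_refl | apply H2, Hj].
Qed.

Definition certified c v y := exists Ls, is_cert Ls /\ records Ls (prf_code c) (list_code v) y.

Lemma certified_by_rule Ls c v y h : is_cert Ls ->
  rule_ok (list_code Ls) (prf_code c) (list_code v) y h = true -> certified c v y.
Proof.
  intros HLs Ok. exists (judgment (prf_code c) (list_code v) y h :: Ls). split.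
  - intros j [<-|Hj].
    + unfold justifiedN. rewrite jc_judgment, ja_judgment, jy_judgment, jh_judgment.
      apply rule_ok_incl with Ls; [apply incl_tl, incl_refl | exact Ok].
    + apply rule_ok_incl with Ls; [apply incl_tl, incl_refl | apply HLs, Hj].
  - exists (judgment (prf_code c) (list_code v) y h).
    rewrite jc_judgment, ja_judgment, jy_judgment. simpl. auto.
Qed.

Lemma certified_Forall2 (gs : list prf) v ys :
  Forall2 (fun g yi => certified g v yi) gs ys ->
  exists Ls, is_cert Ls /\ Forall2 (fun g yi => records Ls (prf_code g) (list_code v) yi) gs ys.
Proof.
  induction 1 as [|g yi gs ys [L1 [V1 M1]] _ [L2 [V2 M2]]].
  - exists []. split; [apply is_cert_nil | constructor].
  - exists (L1 ++ L2). split; [apply is_cert_app; auto | constructor].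
    + apply records_incl with L1; [apply incl_appl, incl_refl | exact M1].
    + eapply Forall2_impl; [|exact M2]. intros.
      apply records_incl with L2; [apply incl_appr, incl_refl | assumption].
Qed.

Lemma certified_below f v n :
  (forall m, m < n -> exists k, certified f (m :: v) (S k)) ->
  exists Ls, is_cert Ls /\
    forall m, m < n -> exists k, records Ls (prf_code f) (list_code (m :: v)) (S k).
Proof.
  induction n; intros H.
  - exists []. split; [apply is_cert_nil | intros; lia].
  - destruct IHn as [L1 [V1 M1]]; [intros m Hm; apply H; lia|].
    destruct (H n (Nat.lt_succ_diag_r n)) as [k [L2 [V2 M2]]].
    exists (L1 ++ L2). split; [apply is_cert_app; auto|].
    intros m Hm. destruct (Nat.eq_dec m n) as [->|].
    + exists k. apply records_incl with L2; [apply incl_appr, incl_refl | exact M2].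
    + destruct (M1 m ltac:(lia)) as [k' Hk']. exists k'.
      apply records_incl with L1; [apply incl_appl, incl_refl | exact Hk'].
Qed.

Lemma Forall2_nth {A B} (R : A -> B -> Prop) l1 l2 d1 d2 i :
  Forall2 R l1 l2 -> i < length l1 -> R (nth i l1 d1) (nth i l2 d2).
Proof.
  intros H. revert i. induction H; simpl; intros i Hi; [lia|].
  destruct i; auto. apply IHForall2. lia.
Qed.

Ltac simpl_rule_ok_goal :=
  unfold_rules; cbn [prf_code list_code]; rewrite ?cfst_cpair, ?csnd_cpair;
  cbn [Nat.eqb andb orb Nat.pred]; rewrite ?orb_false_r.

Lemma certified_comp f gs v ys y :
  Forall2 (fun g yi => certified g v yi) gs ys -> certified f ys y -> certified (PComp f gs) v y.
Proof.
  intros Hgs [Lf [Vf Mf]].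
  destruct (certified_Forall2 gs v ys Hgs) as [Lg [Vg Mg]].
  assert (Hlen : length gs = length ys) by (eapply Forall2_length; eauto).
  apply certified_by_rule with (Lg ++ Lf) (list_code ys); [apply is_cert_app; auto|].
  simpl_rule_ok_goal. rewrite !lenN_list_code, length_map, Hlen, Nat.eqb_refl.
  apply andb_true_iff; split.
  - apply allN_iff. intros i Hi. rewrite !nthN_list_code, memN_records.
    rewrite (nth_indep _ 0 (prf_code PZero)), map_nth by (rewrite length_map; lia).
    apply records_incl with Lg; [apply incl_appl, incl_refl|].
    apply (Forall2_nth _ gs ys PZero 0 i Mg). lia.
  - rewrite cfst_cpair, memN_records.
    apply records_incl with Lf; [apply incl_appr, incl_refl | exact Mf].
Qed.

Lemma certified_mu f v n : certified f (n :: v) 0 ->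
  (forall m, m < n -> exists k, certified f (m :: v) (S k)) -> certified (PMu f) v n.
Proof.
  intros [L0 [V0 M0]] Hbelow.
  destruct (certified_below f v n Hbelow) as [Lm [Vm Mm]].
  apply certified_by_rule with (L0 ++ Lm) 0; [apply is_cert_app; auto|].
  simpl_rule_ok_goal. change (consN n (list_code v)) with (list_code (n :: v)).
  apply andb_true_iff; split.
  - rewrite memN_records. apply records_incl with L0; [apply incl_appl, incl_refl | exact M0].
  - apply allN_iff. intros m Hm. change (consN m (list_code v)) with (list_code (m :: v)).
    rewrite memposN_records_pos. destruct (Mm m Hm) as [k [j [Hj [H1 [H2 H3]]]]].
    exists j. repeat split; auto; [apply in_or_app; auto | lia].
Qed.

Lemma cert_complete c v y : eval c v y -> certified c v y.
Proof.
  revert c v y. apply eval_ind_nested.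
  - intros v. apply certified_by_rule with [] 0; [apply is_cert_nil | reflexivity].
  - intros x v. apply certified_by_rule with [] 0; [apply is_cert_nil|].
    simpl_rule_ok_goal. rewrite hdN_consN, Nat.eqb_refl. reflexivity.
  - intros i v Hi. apply certified_by_rule with [] 0; [apply is_cert_nil|].
    simpl_rule_ok_goal. rewrite lenN_list_code, nthN_list_code, Nat.eqb_refl, andb_true_r.
    apply Nat.ltb_lt, Hi.
  - intros f gs v ys y HF _ Hf. apply certified_comp with ys; [|exact Hf].
    eapply Forall2_impl; [|exact HF]. intros g yi [_ H]. exact H.
  - intros g h v y _ [Lg [Vg Mg]].
    apply certified_by_rule with Lg 0; [exact Vg|]. simpl_rule_ok_goal.
    rewrite hdN_consN, tlN_consN, consN_eqb0. cbn [Nat.eqb negb andb]. rewrite cfst_cpair.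
    apply memN_records, Mg.
  - intros g h n v z y _ [L1 [V1 M1]] _ [L2 [V2 M2]].
    apply certified_by_rule with (L1 ++ L2) z; [apply is_cert_app; auto|]. simpl_rule_ok_goal.
    rewrite hdN_consN, tlN_consN, consN_eqb0. cbn [Nat.eqb negb andb Nat.pred].
    change (consN n (list_code v)) with (list_code (n :: v)).
    change (consN n (consN z (list_code v))) with (list_code (n :: z :: v)).
    apply andb_true_iff; split; apply memN_records.
    + apply records_incl with L1; [apply incl_appl, incl_refl | exact M1].
    + apply records_incl with L2; [apply incl_appr, incl_refl | exact M2].
  - intros f v n _ H0 Hbelow. apply certified_mu; [exact H0|].
    intros m Hm. destruct (Hbelow m Hm) as [k [_ H]]. eauto.
Qed.

Definition jcP := cfstP.
Definition jaP := ap cfstP [csndP].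
Definition jyP := ap cfstP [ap csndP [csndP]].
Definition jhP := ap csndP [ap csndP [csndP]].
Lemma den_jc j : den jcP [j] = jc j.
Proof. apply den_cfst. Qed.
Lemma den_ja j : den jaP [j] = ja j.
Proof. unfold jaP. simpl_den. rewrite den_csnd, den_cfst. reflexivity. Qed.
Lemma den_jy j : den jyP [j] = jy j.
Proof. unfold jyP. simpl_den. rewrite !den_csnd, den_cfst. reflexivity. Qed.
Lemma den_jh j : den jhP [j] = jh j.
Proof. unfold jhP. simpl_den. rewrite !den_csnd. reflexivity. Qed.

Ltac simpl_denP :=
  repeat progress (simpl_den; rewrite ?den_cst, ?den_add, ?den_mul, ?den_pred, ?den_sub,
    ?den_isz, ?den_nz, ?den_leb, ?den_ltb, ?den_eqb, ?den_cfst, ?den_csnd, ?den_cpair,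
    ?den_hd, ?den_tl, ?den_len, ?den_nth, ?den_cons, ?den_iterTl, ?den_jc, ?den_ja,
    ?den_jy, ?den_jh, ?den_and, ?b2n_and, ?den_or, ?den_not, ?b2n_isz, ?b2n_nz, ?den_ite).

Definition memP :=
  ap (exP 4 (ap andP [ap andP [ap eqbP [ap jcP [ap nthP [pj 0; pj 1]]; pj 2];
                               ap eqbP [ap jaP [ap nthP [pj 0; pj 1]]; pj 3]];
                      ap eqbP [ap jyP [ap nthP [pj 0; pj 1]]; pj 4]]))
     [ap lenP [pj 0]; pj 0; pj 1; pj 2; pj 3].
Lemma den_mem L c a y : den memP [L; c; a; y] = Nat.b2n (memN L c a y).
Proof.
  unfold memP. simpl_den. rewrite den_len. apply den_ex; auto. intros i. simpl_denP. reflexivity.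
Qed.

Definition memposP :=
  ap (exP 3 (ap andP [ap andP [ap eqbP [ap jcP [ap nthP [pj 0; pj 1]]; pj 2];
                               ap eqbP [ap jaP [ap nthP [pj 0; pj 1]]; pj 3]];
                      ap nzP [ap jyP [ap nthP [pj 0; pj 1]]]]))
     [ap lenP [pj 0]; pj 0; pj 1; pj 2].
Lemma den_mempos L c a : den memposP [L; c; a] = Nat.b2n (memposN L c a).
Proof.
  unfold memposP. simpl_den. rewrite den_len. apply den_ex; auto. intros i. simpl_denP. reflexivity.
Qed.

(** Programs of arity 2 over [L; j]; [shift] turns one into a program over [i; L; j]. *)
Definition Jc := ap jcP [pj 1].
Definition Ja := ap jaP [pj 1].
Definition Jy := ap jyP [pj 1].
Definition Jh := ap jhP [pj 1].
Definition Jt := ap cfstP [Jc].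
Definition Jb := ap csndP [Jc].
Definition shift (E : prf) := ap E [pj 1; pj 2].

Ltac simpl_rule := unfold shift, Jt, Jb, Jc, Ja, Jy, Jh; simpl_denP;
  rewrite ?den_mem, ?den_mempos; simpl_denP.

Definition zero_ruleP := ap andP [ap eqbP [Jt; cst 0]; ap eqbP [Jy; cst 0]].
Lemma den_zero_rule L j : den zero_ruleP [L; j] = Nat.b2n (zero_rule (jc j) (jy j)).
Proof. unfold zero_ruleP. simpl_rule. reflexivity. Qed.

Definition succ_ruleP :=
  ap andP [ap andP [ap eqbP [Jt; cst 1]; ap nzP [Ja]]; ap eqbP [Jy; ap PSucc [ap hdP [Ja]]]].
Lemma den_succ_rule L j : den succ_ruleP [L; j] = Nat.b2n (succ_rule (jc j) (ja j) (jy j)).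
Proof. unfold succ_ruleP. simpl_rule. reflexivity. Qed.

Definition proj_ruleP :=
  ap andP [ap andP [ap eqbP [Jt; cst 2]; ap ltbP [Jb; ap lenP [Ja]]];
           ap eqbP [Jy; ap nthP [Jb; Ja]]].
Lemma den_proj_rule L j : den proj_ruleP [L; j] = Nat.b2n (proj_rule (jc j) (ja j) (jy j)).
Proof. unfold proj_ruleP. simpl_rule. reflexivity. Qed.

Definition comp_premiseP :=
  ap memP [pj 1; ap nthP [pj 0; ap csndP [shift Jb]]; shift Ja; ap nthP [pj 0; shift Jh]].
Definition comp_ruleP :=
  ap andP [ap andP [ap andP [ap eqbP [Jt; cst 3]; ap eqbP [ap lenP [ap csndP [Jb]]; ap lenP [Jh]]];
                    ap (allP 2 comp_premiseP) [ap lenP [ap csndP [Jb]]; pj 0; pj 1]];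
           ap memP [pj 0; ap cfstP [Jb]; Jh; Jy]].
Lemma den_comp_rule L j :
  den comp_ruleP [L; j] = Nat.b2n (comp_rule L (jc j) (ja j) (jy j) (jh j)).
Proof.
  unfold comp_ruleP. simpl_rule.
  rewrite (den_all 2 comp_premiseP _ [L; j]
             (fun i => memN L (nthN i (csnd (csnd (jc j)))) (ja j) (nthN i (jh j)))); auto.
  - simpl_rule. reflexivity.
  - intros i. unfold comp_premiseP. simpl_rule. reflexivity.
Qed.

Definition rec_ruleP :=
  ap andP [ap andP [ap eqbP [Jt; cst 4]; ap nzP [Ja]];
    ap iteP [ap iszP [ap hdP [Ja]];
             ap memP [pj 0; ap cfstP [Jb]; ap tlP [Ja]; Jy];
             ap andP [ap memP [pj 0; Jc; ap consP [ap predP [ap hdP [Ja]]; ap tlP [Ja]]; Jh];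
                      ap memP [pj 0; ap csndP [Jb];
                               ap consP [ap predP [ap hdP [Ja]]; ap consP [Jh; ap tlP [Ja]]]; Jy]]]].
Lemma den_rec_rule L j :
  den rec_ruleP [L; j] = Nat.b2n (rec_rule L (jc j) (ja j) (jy j) (jh j)).
Proof.
  unfold rec_ruleP, rec_rule. simpl_rule. destruct (hdN (ja j) =? 0); simpl_rule; reflexivity.
Qed.

Definition mu_premiseP := ap memposP [pj 1; shift Jb; ap consP [pj 0; shift Ja]].
Definition mu_ruleP :=
  ap andP [ap andP [ap eqbP [Jt; cst 5]; ap memP [pj 0; Jb; ap consP [Jy; Ja]; cst 0]];
           ap (allP 2 mu_premiseP) [Jy; pj 0; pj 1]].
Lemma den_mu_rule L j : den mu_ruleP [L; j] = Nat.b2n (mu_rule L (jc j) (ja j) (jy j)).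
Proof.
  unfold mu_ruleP. simpl_rule.
  rewrite (den_all 2 mu_premiseP _ [L; j]
             (fun m => memposN L (csnd (jc j)) (consN m (ja j)))); auto.
  - simpl_rule. reflexivity.
  - intros i. unfold mu_premiseP. simpl_rule. reflexivity.
Qed.

Definition justifiedP :=
  ap orP [zero_ruleP; ap orP [succ_ruleP; ap orP [proj_ruleP;
    ap orP [comp_ruleP; ap orP [rec_ruleP; mu_ruleP]]]]].
Lemma den_justified L j : den justifiedP [L; j] = Nat.b2n (justifiedN L j).
Proof.
  unfold justifiedP. simpl_den.
  rewrite den_zero_rule, den_succ_rule, den_proj_rule, den_comp_rule, den_rec_rule, den_mu_rule.
  rewrite !den_or. reflexivity.
Qed.

Definition certP := ap (allP 1 (ap justifiedP [pj 1; ap nthP [pj 0; pj 1]])) [ap lenP [pj 0]; pj 0].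
Lemma den_cert L : den certP [L] = Nat.b2n (certN L).
Proof.
  unfold certP. simpl_den. rewrite den_len. apply den_all; auto.
  intros i. simpl_den. rewrite den_nth, den_justified. reflexivity.
Qed.

(** * The structure *)

(** Nodes are tagged by [cfst].  [yN e] is a loop whose second preimage is [xN e];
    the preimages of [xN e] are [aN e 0] and [bN e 0], the ends of the infinite
    chains [aN e k] and [bN e k].  The chain [cN e n k] leads into [aN e n] when
    [n] certifies that program [e] outputs 1 on [xN e], and ends in a loop at
    [cN e n 0] otherwise.  Numbers with tag at least 5 are fixed points. *)
Definition yN e := cpair 0 e.
Definition xN e := cpair 1 e.
Definition aN e k := cpair 2 (cpair e k).
Definition bN e k := cpair 3 (cpair e k).
Definition cN e n k := cpair 4 (cpair e (cpair n k)).

Definition claims_isoN e L := certN L && memN L e (consN (xN e) 0) 1.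

Lemma claims_isoN_iff c :
  (exists n, claims_isoN (prf_code c) n = true) <-> eval c [xN (prf_code c)] 1.
Proof.
  split.
  - intros [n Hn]. destruct (list_code_surj n) as [Ls <-].
    apply andb_true_iff in Hn as [Hcert Hrec].
    change (consN (xN (prf_code c)) 0) with (list_code [xN (prf_code c)]) in Hrec.
    apply (cert_sound Ls); [apply certN_is_cert, Hcert | apply memN_records, Hrec].
  - intros H. destruct (cert_complete _ _ _ H) as [Ls [Hcert Hrec]].
    exists (list_code Ls). apply andb_true_iff. split; [apply certN_is_cert, Hcert|].
    apply memN_records, Hrec.
Qed.

Definition fN u :=
  let t := cfst u in let d := csnd u in
  if t =? 0 then u
  else if t =? 1 then yN d
  else if t =? 2 then (if csnd d =? 0 then xN (cfst d) else aN (cfst d) (pred (csnd d)))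
  else if t =? 3 then (if csnd d =? 0 then xN (cfst d) else bN (cfst d) (pred (csnd d)))
  else if t =? 4 then
    (if csnd (csnd d) =? 0 then
       (if claims_isoN (cfst d) (cfst (csnd d)) then aN (cfst d) (cfst (csnd d)) else u)
     else cN (cfst d) (cfst (csnd d)) (pred (csnd (csnd d))))
  else u.

Definition betaN u :=
  let t := cfst u in let d := csnd u in
  if t =? 0 then 2
  else if t =? 1 then 2
  else if t =? 2 then 1 + Nat.b2n (claims_isoN (cfst d) (csnd d))
  else if t =? 3 then 1
  else if t =? 4 then
    (if csnd (csnd d) =? 0 then 1 + Nat.b2n (negb (claims_isoN (cfst d) (cfst (csnd d)))) else 1)
  else 1.

Definition claims_isoP :=
  ap andP [ap certP [pj 1];
           ap memP [pj 1; pj 0; ap consP [ap cpairP [cst 1; pj 0]; cst 0]; cst 1]].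
Lemma den_claims_iso e L : den claims_isoP [e; L] = Nat.b2n (claims_isoN e L).
Proof. unfold claims_isoP. simpl_denP. rewrite den_cert, den_mem. simpl_denP. reflexivity. Qed.

Definition Ut := ap cfstP [pj 0].
Definition Ud := ap csndP [pj 0].
Definition De := ap cfstP [Ud].
Definition Dk := ap csndP [Ud].
Definition Dn := ap cfstP [Dk].
Definition Dm := ap csndP [Dk].
Definition ite3 c x y := ap iteP [c; x; y].
Definition is_tag k := ap eqbP [Ut; cst k].

Ltac simpl_struct := unfold ite3, is_tag, De, Dk, Dn, Dm, Ut, Ud; simpl_denP;
  rewrite ?den_claims_iso; simpl_denP.

Definition fP :=
  ite3 (is_tag 0) (pj 0)
  (ite3 (is_tag 1) (ap cpairP [cst 0; Ud])
  (ite3 (is_tag 2) (ite3 (ap iszP [Dk]) (ap cpairP [cst 1; De])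
                        (ap cpairP [cst 2; ap cpairP [De; ap predP [Dk]]]))
  (ite3 (is_tag 3) (ite3 (ap iszP [Dk]) (ap cpairP [cst 1; De])
                        (ap cpairP [cst 3; ap cpairP [De; ap predP [Dk]]]))
  (ite3 (is_tag 4) (ite3 (ap iszP [Dm])
                        (ite3 (ap claims_isoP [De; Dn]) (ap cpairP [cst 2; ap cpairP [De; Dn]]) (pj 0))
                        (ap cpairP [cst 4; ap cpairP [De; ap cpairP [Dn; ap predP [Dm]]]]))
   (pj 0))))).

Lemma den_f u : den fP [u] = fN u.
Proof.
  unfold fP, fN, yN, xN, aN, bN, cN. simpl_struct.
  destruct (cfst u =? 0); simpl_struct; [reflexivity|].
  destruct (cfst u =? 1); simpl_struct; [reflexivity|].
  destruct (cfst u =? 2); simpl_struct; [destruct (csnd (csnd u) =? 0); simpl_struct; reflexivity|].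
  destruct (cfst u =? 3); simpl_struct; [destruct (csnd (csnd u) =? 0); simpl_struct; reflexivity|].
  destruct (cfst u =? 4); simpl_struct; [|reflexivity].
  destruct (csnd (csnd (csnd u)) =? 0); simpl_struct; [|reflexivity].
  destruct (claims_isoN (cfst (csnd u)) (cfst (csnd (csnd u)))); simpl_struct; reflexivity.
Qed.

Definition betaP :=
  ite3 (is_tag 0) (cst 2)
  (ite3 (is_tag 1) (cst 2)
  (ite3 (is_tag 2) (ap PSucc [ap claims_isoP [De; Dk]])
  (ite3 (is_tag 3) (cst 1)
  (ite3 (is_tag 4) (ite3 (ap iszP [Dm]) (ap PSucc [ap notP [ap claims_isoP [De; Dn]]]) (cst 1))
   (cst 1))))).

Lemma den_beta u : den betaP [u] = betaN u.
Proof.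
  unfold betaP, betaN. simpl_struct.
  destruct (cfst u =? 0); simpl_struct; [reflexivity|].
  destruct (cfst u =? 1); simpl_struct; [reflexivity|].
  destruct (cfst u =? 2); simpl_struct; [reflexivity|].
  destruct (cfst u =? 3); simpl_struct; [reflexivity|].
  destruct (cfst u =? 4); simpl_struct; [|reflexivity].
  destruct (csnd (csnd (csnd u)) =? 0); simpl_struct; reflexivity.
Qed.

Lemma computable_of_prim (F : nat -> nat) (c : prf) :
  prim_wf 1 c = true -> (forall x, den c [x] = F x) -> computable F.
Proof. intros Hwf HF. exists c. intros x. rewrite <- HF. apply eval_den, Hwf. Qed.

Lemma computable_fN : computable fN.
Proof. apply computable_of_prim with fP; [vm_compute; reflexivity | exact den_f]. Qed.

Lemma computable_betaN : computable betaN.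
Proof. apply computable_of_prim with betaP; [vm_compute; reflexivity | exact den_beta]. Qed.

Ltac simpl_fN := unfold fN, yN, xN, aN, bN, cN;
  repeat (rewrite ?cfst_cpair, ?csnd_cpair; cbn [Nat.eqb Nat.pred]).

Lemma fN_yN e : fN (yN e) = yN e.
Proof. simpl_fN. reflexivity. Qed.
Lemma fN_xN e : fN (xN e) = yN e.
Proof. simpl_fN. reflexivity. Qed.
Lemma fN_aN0 e : fN (aN e 0) = xN e.
Proof. simpl_fN. reflexivity. Qed.
Lemma fN_aNS e k : fN (aN e (S k)) = aN e k.
Proof. simpl_fN. reflexivity. Qed.
Lemma fN_bN0 e : fN (bN e 0) = xN e.
Proof. simpl_fN. reflexivity. Qed.
Lemma fN_bNS e k : fN (bN e (S k)) = bN e k.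
Proof. simpl_fN. reflexivity. Qed.
Lemma fN_cN0 e n : fN (cN e n 0) = if claims_isoN e n then aN e n else cN e n 0.
Proof. simpl_fN. reflexivity. Qed.
Lemma fN_cNS e n k : fN (cN e n (S k)) = cN e n k.
Proof. simpl_fN. reflexivity. Qed.
Lemma fN_junk u : 5 <= cfst u -> fN u = u.
Proof. intros H. unfold fN. destruct (cfst u) as [|[|[|[|[|t]]]]]; try lia. reflexivity. Qed.

Lemma node_cases u :
  (exists e, u = yN e) \/ (exists e, u = xN e) \/ (exists e k, u = aN e k) \/
  (exists e k, u = bN e k) \/ (exists e n k, u = cN e n k) \/ 5 <= cfst u.
Proof.
  rewrite <- (cpair_cfst_csnd u), <- (cpair_cfst_csnd (csnd u)),
    <- (cpair_cfst_csnd (csnd (csnd u))), cfst_cpair.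
  destruct (cfst u) as [|[|[|[|[|t]]]]].
  - left. eexists. reflexivity.
  - right; left. eexists. reflexivity.
  - do 2 right; left. do 2 eexists. reflexivity.
  - do 3 right; left. do 2 eexists. reflexivity.
  - do 4 right; left. do 3 eexists. reflexivity.
  - do 5 right. lia.
Qed.

Ltac inj_cpair := repeat match goal with
  | H : cpair _ _ = cpair _ _ |- _ => apply cpair_inj in H as [? ?]
  end; subst; rewrite ?cfst_cpair in *; try discriminate; try lia.

Ltac destruct_node a :=
  destruct (node_cases a) as [[? ->]|[[? ->]|[[? [[|?] ->]]|[[? [[|?] ->]]|[[? [? [[|?] ->]]]|?]]]]].

Ltac invert_fN H :=
  let a := match type of H with fN ?a = _ => a end in
  destruct_node a;
  [rewrite fN_yN in H | rewrite fN_xN in H | rewrite fN_aN0 in H | rewrite fN_aNS in H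
  | rewrite fN_bN0 in H | rewrite fN_bNS in H
  | rewrite fN_cN0 in H; destruct (claims_isoN _ _) eqn:?
  | rewrite fN_cNS in H | rewrite fN_junk in H by assumption];
  unfold yN, xN, aN, bN, cN in *; inj_cpair; auto.

Lemma fN_eq_yN a e : fN a = yN e -> a = yN e \/ a = xN e.
Proof. intros H. invert_fN H. Qed.
Lemma fN_eq_xN a e : fN a = xN e -> a = aN e 0 \/ a = bN e 0.
Proof. intros H. invert_fN H. Qed.
Lemma fN_eq_aN a e k : fN a = aN e k -> a = aN e (S k) \/ (a = cN e k 0 /\ claims_isoN e k = true).
Proof. intros H. invert_fN H. Qed.
Lemma fN_eq_bN a e k : fN a = bN e k -> a = bN e (S k).
Proof. intros H. invert_fN H. Qed.
Lemma fN_eq_cN a e n k :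
  fN a = cN e n k -> a = cN e n (S k) \/ (k = 0 /\ a = cN e n 0 /\ claims_isoN e n = false).
Proof. intros H. invert_fN H. Qed.
Lemma fN_eq_junk a u : 5 <= cfst u -> fN a = u -> a = u.
Proof. intros Hu H. invert_fN H. Qed.

Lemma preimage_card_of_list f x l : NoDup l -> (forall a, In a l <-> f a = x) ->
  preimage_card f x (length l).
Proof. intros. exists l. auto. Qed.

Ltac nodup_nodes :=
  repeat (apply NoDup_cons; [simpl; intuition (unfold yN, xN, aN, bN, cN in *; inj_cpair) |]);
  apply NoDup_nil.

Ltac solve_preimages inv :=
  apply preimage_card_of_list;
  [ nodup_nodes
  | intros a; split;
    [ intros Ha; repeat destruct Ha as [<-|Ha]; [..| destruct Ha];
      rewrite ?fN_yN, ?fN_xN, ?fN_aN0, ?fN_aNS, ?fN_bN0, ?fN_bNS, ?fN_cN0, ?fN_cNS;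
      repeat match goal with E : claims_isoN _ _ = _ |- _ => rewrite E end; reflexivity
    | intros H; apply inv in H; simpl; intuition congruence ]].

Lemma preimage_card_yN e : preimage_card fN (yN e) 2.
Proof. change 2 with (length [yN e; xN e]). solve_preimages fN_eq_yN. Qed.

Lemma preimage_card_xN e : preimage_card fN (xN e) 2.
Proof. change 2 with (length [aN e 0; bN e 0]). solve_preimages fN_eq_xN. Qed.

Lemma preimage_card_aN e k : preimage_card fN (aN e k) (1 + Nat.b2n (claims_isoN e k)).
Proof.
  destruct (claims_isoN e k) eqn:E; cbn [Nat.b2n Nat.add].
  - change 2 with (length [aN e (S k); cN e k 0]). solve_preimages fN_eq_aN.
  - change 1 with (length [aN e (S k)]). solve_preimages fN_eq_aN.
Qed.

Lemma preimage_card_bN e k : preimage_card fN (bN e k) 1.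
Proof. change 1 with (length [bN e (S k)]). solve_preimages fN_eq_bN. Qed.

Lemma preimage_card_cN e n k :
  preimage_card fN (cN e n k) (if k =? 0 then 1 + Nat.b2n (negb (claims_isoN e n)) else 1).
Proof.
  destruct k as [|k]; [destruct (claims_isoN e n) eqn:E|]; cbn [Nat.eqb negb Nat.b2n Nat.add].
  - change 1 with (length [cN e n 1]). solve_preimages fN_eq_cN.
  - change 2 with (length [cN e n 1; cN e n 0]). solve_preimages fN_eq_cN.
  - change 1 with (length [cN e n (S (S k))]). solve_preimages fN_eq_cN.
Qed.

Lemma preimage_card_junk u : 5 <= cfst u -> preimage_card fN u 1.
Proof.
  intros Hu. change 1 with (length [u]). apply preimage_card_of_list.
  - repeat constructor. intros [].
  - intros a. split.
    + intros [<-|[]]. apply fN_junk, Hu.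
    + intros H. left. symmetry. eapply fN_eq_junk; eauto.
Qed.

Lemma preimage_card_betaN u : preimage_card fN u (betaN u).
Proof.
  destruct (node_cases u) as [[e ->]|[[e ->]|[[e [k ->]]|[[e [k ->]]|[[e [n [k ->]]]|Hu]]]]];
    unfold betaN, yN, xN, aN, bN, cN; rewrite ?cfst_cpair, ?csnd_cpair; cbn [Nat.eqb];
    rewrite ?cfst_cpair, ?csnd_cpair.
  - apply preimage_card_yN.
  - apply preimage_card_xN.
  - apply preimage_card_aN.
  - apply preimage_card_bN.
  - apply preimage_card_cN.
  - pose proof (preimage_card_junk u Hu) as Hcard.
    destruct (cfst u) as [|[|[|[|[|t]]]]]; [lia .. | exact Hcard].
Qed.

Lemma betaN_1_or_2 u : betaN u = 1 \/ betaN u = 2.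
Proof.
  unfold betaN. repeat match goal with |- context [if ?b then _ else _] => destruct b end;
    try destruct (claims_isoN _ _); auto.
Qed.

(** * Branch isomorphism *)

Lemma iter_aN e k : Nat.iter k fN (aN e k) = aN e 0.
Proof. induction k; auto. rewrite Nat.iter_succ_r, fN_aNS. auto. Qed.
Lemma iter_bN e k : Nat.iter k fN (bN e k) = bN e 0.
Proof. induction k; auto. rewrite Nat.iter_succ_r, fN_bNS. auto. Qed.

Lemma tree_vertex_bN e a : tree_vertex fN (bN e 0) a <-> exists k, a = bN e k.
Proof.
  split.
  - intros [n Hn]. revert a Hn. generalize 0 as k.
    induction n; intros k a Hn; [eauto|].
    rewrite Nat.iter_succ_r in Hn. destruct (IHn _ _ Hn) as [k' Hk'].
    apply fN_eq_bN in Hk'. eauto.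
  - intros [k ->]. exists k. apply iter_bN.
Qed.

Lemma tree_vertex_aN e a : (forall n, claims_isoN e n = false) ->
  tree_vertex fN (aN e 0) a <-> exists k, a = aN e k.
Proof.
  intros Hno. split.
  - intros [n Hn]. revert a Hn. generalize 0 as k.
    induction n; intros k a Hn; [eauto|].
    rewrite Nat.iter_succ_r in Hn. destruct (IHn _ _ Hn) as [k' Hk'].
    apply fN_eq_aN in Hk' as [|[_ H]]; [eauto | congruence].
  - intros [k ->]. exists k. apply iter_aN.
Qed.

Lemma fN_bN_inj e k1 k2 : fN (bN e k1) = fN (bN e k2) -> k1 = k2.
Proof.
  destruct k1, k2; rewrite ?fN_bN0, ?fN_bNS; unfold xN, bN; intros H; inj_cpair; auto.
Qed.

Definition a_to_b u := bN (cfst (csnd u)) (csnd (csnd u)).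

Lemma a_to_b_aN e k : a_to_b (aN e k) = bN e k.
Proof. unfold a_to_b, aN. rewrite !csnd_cpair, cfst_cpair. reflexivity. Qed.

Lemma tree_iso_aN_bN e : (forall n, claims_isoN e n = false) -> tree_iso fN (aN e 0) (bN e 0).
Proof.
  intros Hno. exists a_to_b.
  assert (Hedge : forall k k', aN e k' = fN (aN e k) <-> bN e k' = fN (bN e k)).
  { intros [|k] k'; rewrite ?fN_aN0, ?fN_bN0, ?fN_aNS, ?fN_bNS;
      unfold xN, aN, bN; split; intros H; inj_cpair; auto. }
  split; [|split; [|split]].
  - intros a Ha. apply tree_vertex_aN in Ha as [k ->]; auto.
    rewrite a_to_b_aN. apply tree_vertex_bN. eauto.
  - intros a b Ha Hb. apply tree_vertex_aN in Ha as [k ->]; auto.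
    apply tree_vertex_aN in Hb as [k' ->]; auto.
    rewrite !a_to_b_aN. unfold bN. intros H. inj_cpair.
  - intros b Hb. apply tree_vertex_bN in Hb as [k ->].
    exists (aN e k). split; [apply tree_vertex_aN; eauto | apply a_to_b_aN].
  - intros a b Ha Hb. pose proof Ha as Va. pose proof Hb as Vb.
    apply tree_vertex_aN in Ha as [k ->]; auto. apply tree_vertex_aN in Hb as [k' ->]; auto.
    rewrite !a_to_b_aN. unfold tree_edge.
    assert (Wb : forall k, tree_vertex fN (bN e 0) (bN e k))
      by (intros; apply tree_vertex_bN; eauto).
    rewrite (Hedge k k'). pose proof (Wb k). pose proof (Wb k'). tauto.
Qed.

(** [aN e n] has two preimages in its tree, but every vertex of the [b]-tree has
    only one; an isomorphism cannot merge the two. *)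
Lemma not_tree_iso_aN_bN e n : claims_isoN e n = true -> ~ tree_iso fN (aN e 0) (bN e 0).
Proof.
  intros Hc [g [_ [Hinj [_ Hedge]]]].
  assert (Va : forall k, tree_vertex fN (aN e 0) (aN e k)) by (intros k; exists k; apply iter_aN).
  assert (Vc : tree_vertex fN (aN e 0) (cN e n 0)).
  { exists (S n). rewrite Nat.iter_succ_r, fN_cN0, Hc. apply iter_aN. }
  assert (E1 : tree_edge fN (aN e 0) (aN e (S n)) (aN e n)).
  { split; [|split]; auto. rewrite fN_aNS. reflexivity. }
  assert (E2 : tree_edge fN (aN e 0) (cN e n 0) (aN e n)).
  { split; [|split]; auto. rewrite fN_cN0, Hc. reflexivity. }
  apply Hedge in E1 as [W1 [_ F1]]; auto. apply Hedge in E2 as [W2 [_ F2]]; auto.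
  apply tree_vertex_bN in W1 as [k1 K1]. apply tree_vertex_bN in W2 as [k2 K2].
  assert (k1 = k2) as <- by (apply (fN_bN_inj e); congruence).
  assert (aN e (S n) = cN e n 0) as H by (apply Hinj; auto; congruence).
  unfold aN, cN in H. inj_cpair.
Qed.

Lemma xN_in_Lambda e : in_Lambda fN (xN e).
Proof. apply preimage_card_xN. Qed.

Lemma xN_iso_value e v :
  ((forall n, claims_isoN e n = false) /\ v = 1) \/ ((exists n, claims_isoN e n = true) /\ v = 0) ->
  iso_value fN (xN e) v.
Proof.
  intros Hv. exists (aN e 0), (bN e 0).
  split; [unfold aN, bN; intros H; inj_cpair|].
  split; [apply fN_aN0|]. split; [apply fN_bN0|].
  destruct Hv as [[Hno ->]|[[n Hn] ->]].
  - left. split; auto. apply tree_iso_aN_bN, Hno.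
  - right. split; auto. apply (not_tree_iso_aN_bN e n Hn).
Qed.

Lemma iso_not_computable :
  ~ (exists c : prf, forall x v, in_Lambda fN x -> iso_value fN x v -> eval c [x] v).
Proof.
  intros [c Hc]. set (e := prf_code c).
  assert (Hno : forall n, claims_isoN e n = false).
  { intros n. destruct (claims_isoN e n) eqn:Hn; [exfalso | reflexivity].
    assert (H0 : eval c [xN e] 0) by (apply Hc; [apply xN_in_Lambda | apply xN_iso_value; eauto]).
    assert (H1 : eval c [xN e] 1) by (apply claims_isoN_iff; eauto).
    discriminate (eval_deterministic _ _ _ H0 _ H1). }
  assert (H1 : eval c [xN e] 1) by (apply Hc; [apply xN_in_Lambda | apply xN_iso_value; auto]).
  apply claims_isoN_iff in H1 as [n Hn]. fold e in Hn. congruence.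
Qed.

Theorem proposition3p2 :
  exists f : nat -> nat,
    is_21_structure f /\
    computable f /\
    (exists beta : nat -> nat, computable beta /\
       forall x, preimage_card f x (beta x)) /\
    ~ (exists c : prf, forall x v, in_Lambda f x -> iso_value f x v -> eval c [x] v).
Proof.
  exists fN. split; [|split; [|split]].
  - intros x. destruct (betaN_1_or_2 x) as [H|H]; rewrite <- H; [left | right];
      apply preimage_card_betaN.
  - exact computable_fN.
  - exists betaN. split; [exact computable_betaN | exact preimage_card_betaN].
  - exact iso_not_computable.
Qed.
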